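(* Let $S$ and $T$ be strings and let $(s_1,\dots,s_k)$ be a maximal block decomposition of $S$ with respect to $T$. Then any fragment of $S$ that occurs in $T$ is contained in at most three consecutive blocks $s_i$. Furthermore, any occurrence in $S$ of a longest common substring of $S$ and $T$ contains the first letter of some block.
   Context: A block decomposition of $S$ with respect to $T$ is a sequence of strings $(s_1,\dots,s_k)$ with $S=s_1s_2\cdots s_k$ such that every $s_i$ is a substring of $T$ (the $s_i$ are called blocks, and each corresponds to a fragment of $S$ in the obvious way). It is maximal if $s_is_{i+1}$ is not a substring of $T$ for every $i\in\{1,\dots,k-1\}$. A fragment of $S$ is a contiguous substring $S[i..j]$ at specified positions. A longest common substring of $S$ and $T$ is a longest string that is a substring of both. *)

From mathcomp Require Import all_boot.
Set Implicit Arguments. Unset Strict Implicit. Unset Printing Implicit Defensive.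

(* Strings over an alphabet A are sequences [seq A]; positions are 0-based. *)

Definition substring (A : eqType) (u t : seq A) : bool := infix u t.

Definition block_decomp (A : eqType) (S T : seq A) (bs : seq (seq A)) : Prop :=
  flatten bs = S /\ all (fun b => substring b T) bs.

Definition maximal_block_decomp (A : eqType) (S T : seq A) (bs : seq (seq A)) : Prop :=
  block_decomp S T bs /\
  forall i, i.+1 < size bs ->
    ~~ substring (nth [::] bs i ++ nth [::] bs i.+1) T.

(* starting position in S of the m-th block (0-based); equals size S for m >= k *)
Definition block_start (A : Type) (bs : seq (seq A)) (m : nat) : nat :=
  sumn (map size (take m bs)).

(* the fragment S[i..j] (inclusive, 0-based) *)
Definition fragment (A : Type) (S : seq A) (i j : nat) : seq A :=
  drop i (take j.+1 S).

Definition longest_common_substring (A : eqType) (S T w : seq A) : Prop :=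
  substring w S /\ substring w T /\
  forall u : seq A, substring u S -> substring u T -> size u <= size w.

From mathcomp Require Import all_boot zify.

(* A substring of T cannot contain two consecutive whole blocks, because their
   concatenation is not a substring of T; hence a fragment that starts in block
   s_m ends before block s_(m+3).  For the second claim only the length l of
   the occurrence matters.  If a window of length l starts strictly inside a
   block s_m and also ends inside s_m, then moving its left end one letter back
   gives a common substring of length l + 1 inside s_m, contradicting
   maximality of l.  So the window reaches the start of s_(m+1), and that block
   is nonempty: in a maximal decomposition of a nonempty string an empty block
   would make its concatenation with a neighbour a substring of T. *)

Set Implicit Arguments. Unset Strict Implicit. Unset Printing Implicit Defensive.

Lemma infix_drop_take (A : eqType) (s : seq A) a b : infix (drop a (take b s)) s.
Proof. exact: infix_trans (infix_drop _ _) (infix_take _ _). Qed.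

Lemma infix_drop_take_mono (A : eqType) (s : seq A) a b a' b' :
  a <= a' -> b' <= b -> infix (drop a' (take b' s)) (drop a (take b s)).
Proof.
move=> le_aa' le_b'b; have [le_b'a'|lt_a'b'] := leqP b' a'.
  by rewrite drop_oversize ?infix0s // size_take_min; lia.
have -> : drop a' (take b' s) = drop (a' - a) (take (b' - a) (drop a (take b s))).
  by rewrite take_drop drop_drop !subnK ?take_takel //; lia.
exact: infix_drop_take.
Qed.

Section BlockStarts.
Variables (A : Type) (bs : seq (seq A)).

Lemma block_start0 : block_start bs 0 = 0.
Proof. by rewrite /block_start take0. Qed.

Lemma block_startS m : block_start bs m.+1 = block_start bs m + size (nth [::] bs m).
Proof.
rewrite /block_start; elim: bs m => [|b bs' IH] [|m] //=.
  by rewrite take0 addn0.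
by rewrite IH addnA.
Qed.

Lemma block_start_oversize n : size bs <= n -> block_start bs n = size (flatten bs).
Proof. by move=> le_bs_n; rewrite /block_start take_oversize // size_flatten. Qed.

Lemma block_start_ltn_size n : block_start bs n < size (flatten bs) -> n < size bs.
Proof. by apply: contraTT; rewrite -!leqNgt => /block_start_oversize ->. Qed.

Lemma block_containing p : p < size (flatten bs) ->
  exists2 m, m < size bs & block_start bs m <= p < block_start bs m.+1.
Proof.
rewrite -(@block_start_oversize _ (leqnn _)); elim: (size bs) => [|n IH].
  by rewrite block_start0.
case: (ltnP p (block_start bs n)) => [/IH[m lt_mn bounds] _|le_n_p lt_p_Sn].
  by exists m => //; apply: ltnW.
by exists n => //; apply/andP.
Qed.

Lemma drop_take_block_starts m n :
  drop (block_start bs m) (take (block_start bs n) (flatten bs)) =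
  flatten (drop m (take n bs)).
Proof.
have take_size_add (b r : seq A) k : take (size b + k) (b ++ r) = b ++ take k r.
  by rewrite takeD take_size_cat // drop_size_cat.
rewrite /block_start; elim: bs m n => [|b bs' IH] [|m] [|n] //=.
- by rewrite take0.
- by rewrite !drop0 take_size_add; have := IH 0 n; rewrite take0 !drop0 => ->.
- by rewrite take0.
- by rewrite take_size_add addnC -drop_drop drop_size_cat // IH.
Qed.

Lemma drop_take_block m : m < size bs ->
  drop (block_start bs m) (take (block_start bs m.+1) (flatten bs)) = nth [::] bs m.
Proof.
move=> lt_m; rewrite drop_take_block_starts -[m.+1]/(1 + m) -take_drop.
by rewrite (drop_nth [::]) //= take0 cats0.
Qed.

Lemma drop_take_two_blocks m : m.+1 < size bs ->
  drop (block_start bs m) (take (block_start bs m.+2) (flatten bs)) =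
  nth [::] bs m ++ nth [::] bs m.+1.
Proof.
move=> lt_Sm; rewrite drop_take_block_starts -[m.+2]/(2 + m) -take_drop.
by rewrite (drop_nth [::]) ?(ltnW lt_Sm) // (drop_nth [::]) //= take0 cats0.
Qed.

End BlockStarts.

Section MaximalBlockDecomposition.
Variables (A : eqType) (S T : seq A) (bs : seq (seq A)).
Hypothesis maximal_bs : maximal_block_decomp S T bs.

Let flatten_bs : flatten bs = S. Proof. by case: maximal_bs => [[]]. Qed.

Lemma block_substring m : m < size bs -> substring (nth [::] bs m) T.
Proof.
by case: maximal_bs => [[_ all_sub] _] lt_m; apply: (allP all_sub); apply: mem_nth.
Qed.

Lemma substring_within_block m a b : m < size bs ->
  block_start bs m <= a -> b <= block_start bs m.+1 -> substring (drop a (take b S)) T.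
Proof.
move=> lt_m le_a le_b; apply: infix_trans _ (block_substring lt_m).
by rewrite -(drop_take_block lt_m) flatten_bs infix_drop_take_mono.
Qed.

Lemma not_substring_over_two_blocks m a b : m.+1 < size bs ->
  a <= block_start bs m -> block_start bs m.+2 <= b -> ~~ substring (drop a (take b S)) T.
Proof.
case: maximal_bs => _ maximal lt_Sm le_a le_b.
apply: contra (maximal m lt_Sm); apply: infix_trans.
by rewrite -(drop_take_two_blocks lt_Sm) flatten_bs infix_drop_take_mono.
Qed.

Lemma block_nonempty m : 0 < size S -> m < size bs -> nth [::] bs m != [::].
Proof.
case: maximal_bs => _ maximal S_pos lt_m; apply/eqP => block_m_nil.
have [lt_Sm|le_size_Sm] := ltnP m.+1 (size bs).
  by move: (maximal m lt_Sm); rewrite block_m_nil (block_substring lt_Sm).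
case: m lt_m block_m_nil le_size_Sm => [|m] lt_m block_m_nil le_size_Sm.
  have: size S = block_start bs 1 by rewrite -flatten_bs block_start_oversize.
  by rewrite block_startS block_start0 block_m_nil => size_S0; rewrite size_S0 in S_pos.
by move: (maximal m lt_m); rewrite block_m_nil cats0 (block_substring (ltnW lt_m)).
Qed.

Lemma block_containing_position p : p < size S ->
  exists2 m, m < size bs & block_start bs m <= p < block_start bs m.+1.
Proof. by rewrite -flatten_bs; apply: block_containing. Qed.

Lemma substring_fragment_within_three_blocks i j : i <= j -> j < size S ->
  substring (fragment S i j) T ->
  exists m, block_start bs m <= i /\ j < block_start bs (m + 3).
Proof.
move=> le_ij lt_j sub_ij.
have [|m _ /andP[le_m_i lt_i_Sm]] := block_containing_position (p := i); first lia.
exists m; split => //; rewrite ltnNge; apply/negP => le_end_j.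
have lt_SSm : m.+2 < size bs.
  suff: m + 3 < size bs by lia.
  by apply: block_start_ltn_size; rewrite flatten_bs; lia.
rewrite addn3 in le_end_j.
have := not_substring_over_two_blocks lt_SSm (ltnW lt_i_Sm) (leqW le_end_j).
by rewrite sub_ij.
Qed.

Lemma longest_common_substring_nonempty w : 0 < size S ->
  longest_common_substring S T w -> 0 < size w.
Proof.
move=> S_pos [_ [_ longest]].
have [m lt_m /andP[le_m0 lt_0_Sm]] := block_containing_position S_pos.
have := longest _ (infix_drop_take S 0 1) (substring_within_block lt_m le_m0 lt_0_Sm).
by rewrite drop0 size_take_min; lia.
Qed.

Lemma window_contains_block_start i n : 0 < n -> i + n <= size S ->
  (forall u, substring u S -> substring u T -> size u <= n) ->
  exists m, [/\ m < size bs, nth [::] bs m != [::] & i <= block_start bs m < i + n].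
Proof.
move=> n_pos le_end longest; have S_pos : 0 < size S by lia.
have [|m lt_m /andP[le_m_i lt_i_Sm]] := block_containing_position (p := i); first lia.
have [lt_m_i|le_i_m] := ltnP (block_start bs m) i; last first.
  by exists m; split; [|exact: block_nonempty|apply/andP; split; lia].
have lt_Sm_end : block_start bs m.+1 < i + n.
  rewrite ltnNge; apply/negP => le_Sm_end.
  have le_m_Pi : block_start bs m <= i.-1 by lia.
  have := longest _ (infix_drop_take S i.-1 (i + n))
                     (substring_within_block lt_m le_m_Pi le_Sm_end).
  by rewrite size_drop size_take_min; lia.
have lt_Sm : m.+1 < size bs by apply: block_start_ltn_size; rewrite flatten_bs; lia.
by exists m.+1; split; [|exact: block_nonempty|apply/andP; split; lia].
Qed.

End MaximalBlockDecomposition.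

Theorem lemma4 (A : eqType) (S T : seq A) (bs : seq (seq A)) :
  maximal_block_decomp S T bs ->
  (* any fragment S[i..j] occurring in T lies within at most three consecutive blocks *)
  (forall i j, i <= j -> j < size S -> substring (fragment S i j) T ->
     exists m, block_start bs m <= i /\ j < block_start bs (m + 3)) /\
  (* any occurrence of a longest common substring contains the first letter of a block *)
  (0 < size S ->
   forall w i, longest_common_substring S T w ->
     i + size w <= size S -> take (size w) (drop i S) = w ->
     exists m, [/\ m < size bs, nth [::] bs m != [::] &
                   i <= block_start bs m < i + size w]).
Proof.
move=> maximal_bs; split; first exact: substring_fragment_within_three_blocks.
move=> S_pos w i lcs_w le_end _.
apply: (window_contains_block_start maximal_bs) => //.
- exact: (longest_common_substring_nonempty maximal_bs S_pos lcs_w).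
- by move: lcs_w => [_ [_ longest]].
Qed.
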